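(* Let $X$ be a hyperbolic approximation of $Z$. Any two vertices $v,v'\in V$ can be joined by a geodesic $v=v_0,v_1,\dots,v_{n+1}=v'$ (where $n+1=|vv'|$) such that $\ell(v_i)<\max\{\ell(v_{i-1}),\ell(v_{i+1})\}$ for all $1\le i\le n$.
   Context: Hyperbolic approximation: let $(Z,d)$ be a bounded metric space with at least two points and fix $0<r\le1/6$. Let $k_0$ be the largest integer with $\operatorname{diam}Z<r^{k_0}$. For each integer $k\ge k_0$ choose a maximal $r^k$-separated subset $V_k\subset Z$. Vertex set $V=\bigsqcup_{k\ge k_0}V_k$ (disjoint union), level $\ell(v)=k$ for $v\in V_k$, ball $B(v)=\{z:d(z,v)<2r^k\}$ with closure $\overline B(v)$. Edges: $v,v'$ of equal level with $\overline B(v)\cap\overline B(v')\neq\emptyset$ (horizontal), or levels differing by one with the ball of the higher-level vertex contained in the ball of the lower-level one (radial). Path metric with unit edges, denoted $|vv'|$. A geodesic between vertices is a vertex sequence $v_0,\dots,v_N$ with consecutive vertices adjacent and $N=|v_0v_N|$. *)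

From Stdlib Require Import Reals ZArith List.
From Coquelicot Require Import Coquelicot.
Open Scope R_scope.

Section HypApprox.
Variable T : Type.
Variable d : T -> T -> R.

Definition is_metric : Prop :=
  (forall x y, 0 <= d x y) /\
  (forall x y, d x y = 0 <-> x = y) /\
  (forall x y, d x y = d y x) /\
  (forall x y z, d x z <= d x y + d y z).

Definition metric_bounded : Prop := exists M, forall x y, d x y <= M.

Definition hdiam : Rbar := Lub_Rbar (fun t => exists x y, t = d x y).

Definition is_k0 (r : R) (k0 : Z) : Prop :=
  Rbar_lt hdiam (Finite (powerRZ r k0)) /\
  (forall k : Z, Rbar_lt hdiam (Finite (powerRZ r k)) -> (k <= k0)%Z).

Definition separated (a : R) (A : T -> Prop) : Prop :=
  forall x y, A x -> A y -> x <> y -> a <= d x y.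

Definition maximal_separated (a : R) (A : T -> Prop) : Prop :=
  separated a A /\
  (forall B : T -> Prop, separated a B -> (forall x, A x -> B x) ->
     forall x, B x -> A x).

(** Vertices: tagged pairs (level k, point z) with k >= k0 and z in V_k.
    This realises the disjoint union of the V_k. *)
Definition vertex := (Z * T)%type.
Definition level (v : vertex) : Z := fst v.

Definition is_vertex (k0 : Z) (V : Z -> T -> Prop) (v : vertex) : Prop :=
  (k0 <= fst v)%Z /\ V (fst v) (snd v).

Definition ball (r : R) (v : vertex) (z : T) : Prop :=
  d z (snd v) < 2 * powerRZ r (fst v).

Definition mclosure (A : T -> Prop) (z : T) : Prop :=
  forall eps, 0 < eps -> exists a, A a /\ d z a < eps.

Definition edge (r : R) (k0 : Z) (V : Z -> T -> Prop) (v w : vertex) : Prop :=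
  is_vertex k0 V v /\ is_vertex k0 V w /\
  (
    (level v = level w /\ v <> w /\
       exists z, mclosure (ball r v) z /\ mclosure (ball r w) z)
    \/
    (level w = (level v + 1)%Z /\ forall z, ball r w z -> ball r v z)
    \/
    (level v = (level w + 1)%Z /\ forall z, ball r v z -> ball r w z) ).

Definition walk (r : R) (k0 : Z) (V : Z -> T -> Prop)
  (n : nat) (p : nat -> vertex) (u w : vertex) : Prop :=
  p 0%nat = u /\ p n = w /\ is_vertex k0 V u /\
  (forall i, (i < n)%nat -> edge r k0 V (p i) (p (S i))).

Definition gdist (r : R) (k0 : Z) (V : Z -> T -> Prop)
  (u w : vertex) (n : nat) : Prop :=
  (exists p, walk r k0 V n p u w) /\
  (forall m p, walk r k0 V m p u w -> (n <= m)%nat).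

End HypApprox.

(* Take a shortest walk from v to v' whose total height (sum of the levels of its vertices) is minimal
   among shortest walks.  If an interior vertex x is at least as high as both of its neighbours, then
   x lies above the root level, and since r <= 1/6 its parent W (a vertex one level lower within
   r^(k-1) of x) is adjacent or equal to each neighbour of x.  If W equals a neighbour, the two
   neighbours coincide or are adjacent and the walk could be shortened; otherwise replacing x by W
   keeps a shortest walk and lowers the total height. *)
From Pilot Require Import Defs.
From Stdlib Require Import Reals ZArith List Lia Lra Classical.
From Coquelicot Require Import Coquelicot.
Open Scope R_scope.

Lemma exists_least_nat (P : nat -> Prop) :
  (exists n, P n) -> exists n, P n /\ forall m, P m -> (n <= m)%nat.
Proof.
  intros [n Hn]; revert Hn; induction n as [n IH] using lt_wf_ind; intros Hn.
  destruct (classic (exists m, (m < n)%nat /\ P m)) as [[m [Hmn Hm]]|Hno].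
  - exact (IH m Hmn Hm).
  - exists n; split; [exact Hn|]. intros m Hm.
    destruct (Nat.lt_ge_cases m n); [exfalso; eauto|assumption].
Qed.

Lemma powerRZ_pred (r : R) (k : Z) : r <> 0 -> powerRZ r k = r * powerRZ r (k - 1).
Proof.
  intros Hr. replace k with ((k - 1) + 1)%Z at 1 by lia.
  rewrite powerRZ_add by exact Hr. simpl. ring.
Qed.

Lemma vertex_eq (T : Type) (u x : vertex T) : fst u = fst x -> snd u = snd x -> u = x.
Proof. destruct u, x; simpl; intros; subst; reflexivity. Qed.

Section Walks.

Variables (T : Type) (d : T -> T -> R) (r : R) (k0 : Z) (V : Z -> T -> Prop).

Lemma edge_sym (v w : vertex T) : edge T d r k0 V v w -> edge T d r k0 V w v.
Proof.
  intros (Hv & Hw & [(Hl & Hne & z & Hz1 & Hz2)|[H|H]]); do 2 (split; [assumption|]).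
  - left; split; [auto|split; [intro E; apply Hne; auto|exists z; auto]].
  - right; right; exact H.
  - right; left; exact H.
Qed.

Lemma walk_refl (x : vertex T) :
  is_vertex T k0 V x -> walk T d r k0 V 0 (fun _ => x) x x.
Proof. intros Hx; split; [|split; [|split]]; auto; intros; lia. Qed.

Lemma walk_edge (a b : vertex T) :
  edge T d r k0 V a b -> walk T d r k0 V 1 (fun j => if (j =? 0)%nat then a else b) a b.
Proof.
  intros Hab; split; [|split; [|split]]; [reflexivity|reflexivity|apply Hab|].
  intros i Hi; replace i with 0%nat by lia; exact Hab.
Qed.

Lemma walk_cat (n1 n2 : nat) (p1 p2 : nat -> vertex T) (a b c : vertex T) :
  walk T d r k0 V n1 p1 a b -> walk T d r k0 V n2 p2 b c ->
  walk T d r k0 V (n1 + n2)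
    (fun j => if (j <=? n1)%nat then p1 j else p2 (j - n1)%nat) a c.
Proof.
  intros (H0 & HN & Ha & He) (G0 & GN & Gb & Ge); split; [|split; [|split]].
  - exact H0.
  - destruct (Nat.leb_spec (n1 + n2) n1).
    + replace n2 with 0%nat in * by lia. rewrite Nat.add_0_r, HN, <- G0; exact GN.
    + replace (n1 + n2 - n1)%nat with n2 by lia; exact GN.
  - exact Ha.
  - intros j Hj; destruct (Nat.leb_spec j n1), (Nat.leb_spec (S j) n1); try lia.
    + apply He; lia.
    + replace j with n1 by lia. rewrite HN, <- G0.
      replace (S n1 - n1)%nat with 1%nat by lia. apply Ge; lia.
    + replace (S j - n1)%nat with (S (j - n1)) by lia. apply Ge; lia.
Qed.

Lemma walk_rev (N : nat) (p : nat -> vertex T) (u w : vertex T) :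
  walk T d r k0 V N p u w -> walk T d r k0 V N (fun j => p (N - j)%nat) w u.
Proof.
  intros (H0 & HN & Hu & He); split; [|split; [|split]].
  - rewrite Nat.sub_0_r; exact HN.
  - rewrite Nat.sub_diag; exact H0.
  - destruct N as [|N].
    + rewrite <- HN, H0; exact Hu.
    + rewrite <- HN. apply (He N); lia.
  - intros j Hj. apply edge_sym.
    replace (N - j)%nat with (S (N - S j)) by lia. apply He; lia.
Qed.

Lemma walk_cut_loop (N : nat) (p : nat -> vertex T) (u w : vertex T) (a m : nat) :
  walk T d r k0 V N p u w -> (a + m <= N)%nat -> p a = p (a + m)%nat ->
  walk T d r k0 V (N - m)
    (fun j => if (j <=? a)%nat then p j else p (j + m)%nat) u w.
Proof.
  intros (H0 & HN & Hu & He) Ham Hloop; split; [|split; [|split]].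
  - exact H0.
  - destruct (Nat.leb_spec (N - m) a).
    + replace (N - m)%nat with a by lia. rewrite Hloop.
      replace (a + m)%nat with N by lia; exact HN.
    + replace (N - m + m)%nat with N by lia; exact HN.
  - exact Hu.
  - intros j Hj; destruct (Nat.leb_spec j a), (Nat.leb_spec (S j) a); try lia.
    + apply He; lia.
    + replace j with a by lia. rewrite Hloop. apply He; lia.
    + apply He; lia.
Qed.

Lemma walk_skip (N : nat) (p : nat -> vertex T) (u w : vertex T) (a : nat) :
  walk T d r k0 V N p u w -> (a + 2 <= N)%nat ->
  edge T d r k0 V (p a) (p (a + 2)%nat) ->
  walk T d r k0 V (N - 1) (fun j => if (j <=? a)%nat then p j else p (S j)) u w.
Proof.
  intros (H0 & HN & Hu & He) Ha Hshort; split; [|split; [|split]].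
  - exact H0.
  - destruct (Nat.leb_spec (N - 1) a); [lia|].
    replace (S (N - 1)) with N by lia; exact HN.
  - exact Hu.
  - intros j Hj; destruct (Nat.leb_spec j a), (Nat.leb_spec (S j) a); try lia.
    + apply He; lia.
    + replace j with a by lia. replace (S (S a)) with (a + 2)%nat by lia; exact Hshort.
    + apply He; lia.
Qed.

Lemma walk_replace (N : nat) (p : nat -> vertex T) (u w W : vertex T) (i : nat) :
  walk T d r k0 V N p u w -> (1 <= i)%nat -> (i + 1 <= N)%nat ->
  edge T d r k0 V (p (i - 1)%nat) W -> edge T d r k0 V W (p (i + 1)%nat) ->
  walk T d r k0 V N (fun j => if (j =? i)%nat then W else p j) u w.
Proof.
  intros (H0 & HN & Hu & He) Hi1 Hi2 E1 E2; split; [|split; [|split]].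
  - destruct (Nat.eqb_spec 0 i); [lia|exact H0].
  - destruct (Nat.eqb_spec N i); [lia|exact HN].
  - exact Hu.
  - intros j Hj; destruct (Nat.eqb_spec j i), (Nat.eqb_spec (S j) i); try lia.
    + subst j. replace (S i) with (i + 1)%nat by lia; exact E2.
    + replace j with (i - 1)%nat by lia; exact E1.
    + apply He; lia.
Qed.

End Walks.

Section HyperbolicApproximation.

Variables (T : Type) (d : T -> T -> R).
Hypothesis Hmetric : is_metric T d.
Variables (r : R) (k0 : Z) (V : Z -> T -> Prop).
Hypotheses (Hr0 : 0 < r) (Hr1 : r <= 1 / 6).
Hypothesis Hk0 : is_k0 T d r k0.
Hypothesis HV : forall k : Z, (k0 <= k)%Z -> maximal_separated T d (powerRZ r k) (V k).

Lemma dist_refl (z : T) : d z z = 0.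
Proof. destruct Hmetric as (_ & Hzero & _). apply Hzero; reflexivity. Qed.

(* A point at distance >= a from all of A could be added to A, contradicting maximality. *)
Lemma maximal_separated_cover (a : R) (A : T -> Prop) :
  0 < a -> maximal_separated T d a A -> forall z, exists w, A w /\ d z w < a.
Proof.
  intros Ha [Hsep Hmax] z. apply NNPP; intro Hfar.
  assert (Hz : A z).
  { apply (Hmax (fun x => A x \/ x = z)); [|now left|now right].
    destruct Hmetric as (_ & _ & Hsym & _).
    intros x y [Hx|Ex] [Hy|Ey] Hne.
    - now apply Hsep.
    - subst y. apply Rnot_lt_le; intro; apply Hfar; exists x; rewrite Hsym; auto.
    - subst x. apply Rnot_lt_le; intro; apply Hfar; exists y; auto.
    - congruence. }
  apply Hfar; exists z; rewrite dist_refl; auto.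
Qed.

(* V_k0 is a single point because diam Z < r^k0 while V_k0 is r^k0-separated. *)
Lemma root_level_unique (a b : T) : V k0 a -> V k0 b -> a = b.
Proof.
  intros Ha Hb. apply NNPP; intro Hne.
  pose proof (proj1 (HV k0 (Z.le_refl _)) a b Ha Hb Hne) as Hab.
  destruct Hk0 as [Hdiam _]. unfold hdiam in Hdiam.
  destruct (Lub_Rbar_correct (fun t => exists x y, t = d x y)) as [Hub _].
  specialize (Hub (d a b) (ex_intro _ a (ex_intro _ b eq_refl))).
  destruct (Lub_Rbar (fun t => exists x y, t = d x y)); simpl in *; try contradiction; lra.
Qed.

Lemma root_vertex_exists (t : T) : exists rho, is_vertex T k0 V rho /\ fst rho = k0.
Proof.
  destruct (maximal_separated_cover _ (V k0) (powerRZ_lt _ k0 Hr0) (HV k0 (Z.le_refl _)) t)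
    as [w [Hw _]].
  exists (k0, w); repeat split; simpl; auto; lia.
Qed.

Lemma mclosure_ball_dist (v : vertex T) (z : T) :
  mclosure T d (Defs.ball T d r v) z -> d z (snd v) <= 2 * powerRZ r (fst v).
Proof.
  intros Hz. apply Rnot_lt_le; intro Hlt.
  destruct (Hz (d z (snd v) - 2 * powerRZ r (fst v))) as [a [Ha Hza]]; [lra|].
  unfold Defs.ball in Ha. destruct Hmetric as (_ & _ & _ & Htri).
  specialize (Htri z a (snd v)). lra.
Qed.

Lemma ball_mclosure (v : vertex T) (z : T) :
  Defs.ball T d r v z -> mclosure T d (Defs.ball T d r v) z.
Proof. intros Hz eps Heps. exists z; rewrite dist_refl; auto. Qed.

Lemma ball_center (v : vertex T) : Defs.ball T d r v (snd v).
Proof.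
  unfold Defs.ball. rewrite dist_refl. pose proof (powerRZ_lt r (fst v) Hr0). lra.
Qed.

Definition is_parent (x W : vertex T) : Prop :=
  is_vertex T k0 V W /\ fst W = (fst x - 1)%Z /\
  d (snd x) (snd W) < powerRZ r (fst x - 1) /\
  (forall z, Defs.ball T d r x z -> Defs.ball T d r W z).

Lemma parent_exists (x : vertex T) :
  is_vertex T k0 V x -> (k0 < fst x)%Z -> exists W, is_parent x W.
Proof.
  intros Hx Hlt.
  destruct (maximal_separated_cover _ (V (fst x - 1)%Z) (powerRZ_lt _ _ Hr0)
              (HV (fst x - 1)%Z ltac:(lia)) (snd x)) as [w [Hw Hxw]].
  exists ((fst x - 1)%Z, w); repeat split; simpl; auto; [lia|].
  intros z Hz. unfold Defs.ball in *; simpl in *. rewrite powerRZ_pred in Hz by lra.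
  set (a := powerRZ r (fst x - 1)) in *. assert (0 < a) by apply powerRZ_lt, Hr0.
  destruct Hmetric as (_ & _ & _ & Htri). specialize (Htri z (snd x) w).
  assert (r * a <= a / 6) by nra. lra.
Qed.

Lemma parent_edge (x W : vertex T) :
  is_vertex T k0 V x -> is_parent x W -> edge T d r k0 V x W.
Proof.
  intros Hx (HW & HWl & _ & Hball); split; [exact Hx|split; [exact HW|]].
  right; right; split; [unfold level; lia|exact Hball].
Qed.

(* Here r <= 1/6 is needed: for a neighbour u of x at the same level k and t in B(u),
   d(t, W) < 2 r^k + 4 r^k + r^(k-1) <= 2 r^(k-1). *)
Lemma parent_adjacent (x u W : vertex T) :
  edge T d r k0 V u x -> (fst u <= fst x)%Z -> is_parent x W ->
  u = W \/ edge T d r k0 V W u.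
Proof.
  intros (Hu & Hx & Hux) Hle (HW & HWl & HxW & Hball).
  destruct Hux as [(Hl & Hne & z & Hzu & Hzx)|[(Hl & Hsub)|(Hl & _)]]; unfold level in *.
  - right; split; [exact HW|split; [exact Hu|]]. right; left; split; [unfold level; lia|].
    intros t Ht. unfold Defs.ball in *. rewrite HWl.
    apply mclosure_ball_dist in Hzu, Hzx.
    rewrite Hl in Ht, Hzu. rewrite powerRZ_pred in Ht, Hzu, Hzx by lra.
    set (a := powerRZ r (fst x - 1)) in *. assert (0 < a) by apply powerRZ_lt, Hr0.
    destruct Hmetric as (_ & _ & Hsym & Htri).
    pose proof (Htri t (snd u) (snd W)). pose proof (Htri (snd u) (snd x) (snd W)).
    pose proof (Htri (snd u) z (snd x)). rewrite (Hsym (snd u) z) in *.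
    assert (r * a <= a / 6) by nra. lra.
  - destruct (classic (u = W)) as [E|E]; [now left|right].
    split; [exact HW|split; [exact Hu|]]. left; split; [unfold level; lia|split; [intro; apply E; auto|]].
    exists (snd x); split; apply ball_mclosure.
    + apply Hball, ball_center.
    + apply Hsub, ball_center.
  - lia.
Qed.

Lemma edge_from_below_not_root (u x : vertex T) :
  edge T d r k0 V u x -> (fst u <= fst x)%Z -> (k0 < fst x)%Z.
Proof.
  intros ([Hu1 Hu2] & [Hx1 Hx2] & Hux) Hle.
  destruct Hux as [(Hl & Hne & _)|[(Hl & _)|(Hl & _)]]; unfold level in *; try lia.
  destruct (Z.eq_dec (fst x) k0) as [Hroot|]; [|lia]. exfalso; apply Hne.
  apply vertex_eq; [exact Hl|]. rewrite Hl, Hroot in Hu2. rewrite Hroot in Hx2.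
  exact (root_level_unique _ _ Hu2 Hx2).
Qed.

Lemma walk_to_root (x rho : vertex T) :
  is_vertex T k0 V x -> is_vertex T k0 V rho -> fst rho = k0 ->
  exists m p, walk T d r k0 V m p x rho.
Proof.
  intros Hx Hrho Hl. remember (Z.to_nat (fst x - k0)) as n eqn:Hn.
  revert x Hx Hn; induction n as [|n IH]; intros x Hx Hn.
  - assert (x = rho) as ->.
    { destruct Hx as [Hx1 Hx2], Hrho as [_ Hrho2].
      apply vertex_eq; [lia|]. replace (fst x) with k0 in Hx2 by lia.
      rewrite Hl in Hrho2. exact (root_level_unique _ _ Hx2 Hrho2). }
    exists 0%nat, (fun _ => rho); apply walk_refl, Hrho.
  - destruct (parent_exists x Hx ltac:(lia)) as [W HxW].
    destruct (IH W (proj1 HxW) ltac:(destruct HxW as (_ & -> & _); lia)) as (m & p & Hp).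
    do 2 eexists. eapply walk_cat; [apply walk_edge, parent_edge; eauto|exact Hp].
Qed.

Lemma walk_exists (v v' : vertex T) :
  is_vertex T k0 V v -> is_vertex T k0 V v' -> exists m p, walk T d r k0 V m p v v'.
Proof.
  intros Hv Hv'. destruct (root_vertex_exists (snd v)) as (rho & Hrho & Hl).
  destruct (walk_to_root v rho Hv Hrho Hl) as (m1 & p1 & H1).
  destruct (walk_to_root v' rho Hv' Hrho Hl) as (m2 & p2 & H2).
  do 2 eexists. eapply walk_cat; [exact H1|exact (walk_rev _ _ _ _ _ _ _ _ _ H2)].
Qed.

Fixpoint height_sum (p : nat -> vertex T) (n : nat) : nat :=
  match n with
  | 0 => Z.to_nat (fst (p 0%nat) - k0)
  | S m => (height_sum p m + Z.to_nat (fst (p (S m)) - k0))%nat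
  end.

Lemma height_sum_ext (p q : nat -> vertex T) (n : nat) :
  (forall j, (j <= n)%nat -> p j = q j) -> height_sum p n = height_sum q n.
Proof.
  induction n as [|n IH]; intros Hpq; simpl; rewrite Hpq by lia; [reflexivity|].
  rewrite IH by (intros; apply Hpq; lia); reflexivity.
Qed.

Lemma height_sum_replace (p : nat -> vertex T) (W : vertex T) (n i : nat) :
  (i <= n)%nat -> (Z.to_nat (fst W - k0) < Z.to_nat (fst (p i) - k0))%nat ->
  (height_sum (fun j => if (j =? i)%nat then W else p j) n < height_sum p n)%nat.
Proof.
  intros Hi HW. induction n as [|n IH]; cbn [height_sum].
  - replace i with 0%nat in * by lia; simpl; exact HW.
  - destruct (Nat.eq_dec i (S n)) as [->|Hne].
    + rewrite Nat.eqb_refl, (height_sum_ext _ p n); [lia|].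
      intros j Hj; destruct (Nat.eqb_spec j (S n)); [lia|reflexivity].
    + destruct (Nat.eqb_spec (S n) i); [lia|]. specialize (IH ltac:(lia)); lia.
Qed.

Definition levels_peak_free (N : nat) (p : nat -> vertex T) : Prop :=
  forall i : nat, (1 <= i)%nat -> (i + 1 <= N)%nat ->
    (level T (p i) < Z.max (level T (p (i - 1)%nat)) (level T (p (i + 1)%nat)))%Z.

Lemma geodesic_lower_peak (v v' : vertex T) (N : nat) (p : nat -> vertex T) (i : nat) :
  gdist T d r k0 V v v' N -> walk T d r k0 V N p v v' ->
  (1 <= i)%nat -> (i + 1 <= N)%nat ->
  (Z.max (level T (p (i - 1)%nat)) (level T (p (i + 1)%nat)) <= level T (p i))%Z ->
  exists q, walk T d r k0 V N q v v' /\ (height_sum q N < height_sum p N)%nat.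
Proof.
  intros [_ Hmin] Hp Hi1 Hi2 Hpeak. unfold level in Hpeak.
  pose proof Hp as (_ & _ & _ & He).
  assert (E1 : edge T d r k0 V (p (i - 1)%nat) (p i))
    by (replace i with (S (i - 1)) at 2 by lia; apply He; lia).
  assert (E2 : edge T d r k0 V (p (i + 1)%nat) (p i))
    by (apply edge_sym; replace (i + 1)%nat with (S i) by lia; apply He; lia).
  assert (L1 : (fst (p (i - 1)%nat) <= fst (p i))%Z) by lia.
  assert (L2 : (fst (p (i + 1)%nat) <= fst (p i))%Z) by lia.
  assert (Hshort : ~ edge T d r k0 V (p (i - 1)%nat) (p (i + 1)%nat)).
  { intro Hed. replace (i + 1)%nat with (i - 1 + 2)%nat in Hed by lia.
    pose proof (Hmin _ _ (walk_skip T d r k0 V N p v v' (i - 1) Hp ltac:(lia) Hed)); lia. }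
  destruct (parent_exists (p i) (proj1 (proj2 E1)) (edge_from_below_not_root _ _ E1 L1))
    as [W HW].
  destruct (parent_adjacent _ _ W E1 L1 HW) as [A1|A1];
    destruct (parent_adjacent _ _ W E2 L2 HW) as [A2|A2].
  - exfalso. assert (Hloop : p (i - 1)%nat = p (i - 1 + 2)%nat)
      by (replace (i - 1 + 2)%nat with (i + 1)%nat by lia; congruence).
    pose proof (Hmin _ _ (walk_cut_loop T d r k0 V N p v v' (i - 1) 2 Hp ltac:(lia) Hloop)); lia.
  - exfalso; apply Hshort; rewrite A1; exact A2.
  - exfalso; apply Hshort; rewrite A2; apply edge_sym; exact A1.
  - eexists; split.
    + exact (walk_replace T d r k0 V N p v v' W i Hp Hi1 Hi2 (edge_sym _ _ _ _ _ _ _ A1) A2).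
    + apply height_sum_replace; [lia|]. destruct HW as ([HWk _] & HWl & _). lia.
Qed.

Lemma geodesic_peak_free (v v' : vertex T) (N : nat) (p : nat -> vertex T) :
  gdist T d r k0 V v v' N -> walk T d r k0 V N p v v' ->
  exists q, walk T d r k0 V N q v v' /\ levels_peak_free N q.
Proof.
  intros Hgeo. remember (height_sum p N) as h eqn:Hh. revert p Hh.
  induction h as [h IH] using lt_wf_ind; intros p Hh Hp.
  destruct (classic (levels_peak_free N p)) as [Hfree|Hpeak]; [now exists p|].
  apply not_all_ex_not in Hpeak as [i Hi].
  apply imply_to_and in Hi as [Hi1 Hi]. apply imply_to_and in Hi as [Hi2 Hi].
  destruct (geodesic_lower_peak v v' N p i Hgeo Hp Hi1 Hi2 ltac:(lia)) as (q & Hq & Hlt).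
  exact (IH (height_sum q N) ltac:(lia) q eq_refl Hq).
Qed.

End HyperbolicApproximation.

Theorem mainTheorem7
  (T : Type) (d : T -> T -> R)
  (Hmetric : is_metric T d)
  (Hbounded : metric_bounded T d)
  (Htwo : exists x y : T, x <> y)
  (r : R) (Hr0 : 0 < r) (Hr1 : r <= 1 / 6)
  (k0 : Z) (Hk0 : is_k0 T d r k0)
  (V : Z -> T -> Prop)
  (HV : forall k : Z, (k0 <= k)%Z -> maximal_separated T d (powerRZ r k) (V k)) :
  forall v v' : vertex T,
    is_vertex T k0 V v -> is_vertex T k0 V v' ->
    exists (N : nat) (p : nat -> vertex T),
      walk T d r k0 V N p v v' /\
      gdist T d r k0 V v v' N /\
      (forall i : nat, (1 <= i)%nat -> (i + 1 <= N)%nat ->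
         (level T (p i) < Z.max (level T (p (i - 1)%nat)) (level T (p (i + 1)%nat)))%Z).
Proof.
  intros v v' Hv Hv'.
  destruct (exists_least_nat (fun n => exists p, walk T d r k0 V n p v v'))
    as (N & [p Hp] & Hmin).
  { exact (walk_exists T d Hmetric r k0 V Hr0 Hr1 Hk0 HV v v' Hv Hv'). }
  assert (Hgeo : gdist T d r k0 V v v' N).
  { split; [now exists p|]. intros m q Hq; apply Hmin; eauto. }
  destruct (geodesic_peak_free T d Hmetric r k0 V Hr0 Hr1 Hk0 HV v v' N p Hgeo Hp)
    as (q & Hq & Hfree).
  exists N, q; auto.
Qed.
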